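(* Let $f$ be an L-additive arithmetic function whose associated completely multiplicative function $h_f$ is nonzero-valued, let $\Lambda_f$ be its generalized von Mangoldt function, and let $g$ be a completely additive arithmetic function. Then for every positive integer $n$, $$(\Lambda_f\ast g)(n)=\frac{f(n)g(n)}{h_f(n)}-(1\ast g\Lambda_f)(n).$$
   Context: An arithmetic function $f:\mathbb{N}\to\mathbb{C}$ is L-additive if there is a completely multiplicative function $h_f$ such that $f(mn)=f(m)h_f(n)+f(n)h_f(m)$ for all positive integers $m,n$; such an $h_f$ is fixed. $\Lambda_f(n)=\frac{f(p)}{h_f(p)}$ if $n=p^k$ for some prime $p$ and integer $k\geq1$, and $0$ otherwise. $g$ completely additive means $g(mn)=g(m)+g(n)$ for all $m,n$. $1$ is the constant function $1$, $\ast$ is Dirichlet convolution $(F\ast G)(n)=\sum_{d\mid n}F(d)G(n/d)$, and $g\Lambda_f$ is the pointwise product. *)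

From mathcomp Require Import all_boot all_algebra.
Set Implicit Arguments. Unset Strict Implicit. Unset Printing Implicit Defensive.
Import GRing.Theory Num.Theory.
Local Open Scope ring_scope.

(* Arithmetic functions N -> C, modelled as nat -> C; the value at 0 is irrelevant. *)

Definition completely_multiplicative (C : nzRingType) (h : nat -> C) : Prop :=
  forall m n : nat, (0 < m)%N -> (0 < n)%N -> h (m * n)%N = h m * h n.

Definition completely_additive (C : nzRingType) (g : nat -> C) : Prop :=
  forall m n : nat, (0 < m)%N -> (0 < n)%N -> g (m * n)%N = g m + g n.

Definition L_additive_wrt (C : nzRingType) (f h : nat -> C) : Prop :=
  completely_multiplicative h /\
  forall m n : nat, (0 < m)%N -> (0 < n)%N ->
    f (m * n)%N = f m * h n + f n * h m.

Definition is_prime_power (n : nat) : bool := size (primes n) == 1%N.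

(* generalized von Mangoldt function: f(p)/h(p) if n = p^k (k>=1), else 0;
   for a prime power n, pdiv n is its unique prime p *)
Definition LambdaF (C : fieldType) (f h : nat -> C) (n : nat) : C :=
  if is_prime_power n then f (pdiv n) / h (pdiv n) else 0.

Definition dconv (C : nzRingType) (F G : nat -> C) (n : nat) : C :=
  \sum_(d <- divisors n) F d * G (n %/ d)%N.

Definition one_fn (C : nzRingType) : nat -> C := fun _ => 1.

(** Since [h_f] is completely multiplicative and never vanishes, [F := f / h_f]
    is completely additive, so [F n = sum_(p^k || n) F p], which says exactly
    that [Lambda_f * 1 = F].  Writing [g (n/d) = g n - g d] in the convolution
    then gives [(Lambda_f * g)(n) = F n g n - sum_(d | n) Lambda_f(d) g(d)], and
    the last sum is [(1 * g Lambda_f)(n)] after the reindexing [d -> n/d]. *)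

From mathcomp Require Import all_boot all_algebra.
From mathcomp Require Import ring.
Set Implicit Arguments. Unset Strict Implicit. Unset Printing Implicit Defensive.
Import GRing.Theory Num.Theory.
Local Open Scope ring_scope.

Lemma perm_divisors_div n : (0 < n)%N ->
  perm_eq [seq (n %/ d)%N | d <- divisors n] (divisors n).
Proof.
move=> n_gt0.
have divn_invol d : (d %| n)%N -> (n %/ (n %/ d))%N = d.
  by move=> dn; rewrite divnA // mulKn.
apply: uniq_perm; [|exact: divisors_uniq|].
- rewrite (map_inj_in_uniq _) ?divisors_uniq // => d e.
  rewrite -!dvdn_divisors // => dn en de.
  by rewrite -(divn_invol d dn) de divn_invol.
move=> d; rewrite -dvdn_divisors //; apply/mapP/idP => [[e]|dn].
  by rewrite -dvdn_divisors // => en ->; apply: dvdn_div.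
by exists (n %/ d)%N; rewrite ?divn_invol // -dvdn_divisors // dvdn_div.
Qed.

Lemma big_divisors_div (R : Type) (idx : R) (op : Monoid.com_law idx)
    (F : nat -> R) n : (0 < n)%N ->
  \big[op/idx]_(d <- divisors n) F (n %/ d)%N = \big[op/idx]_(d <- divisors n) F d.
Proof. by move=> n_gt0; rewrite -[RHS](perm_big _ (perm_divisors_div n_gt0)) big_map. Qed.

Lemma dconv_one_fnl (C : nzRingType) (G : nat -> C) n : (0 < n)%N ->
  dconv (@one_fn C) G n = \sum_(d <- divisors n) G d.
Proof.
move=> n_gt0; rewrite /dconv /one_fn.
by under eq_bigr do rewrite mul1r; apply: big_divisors_div.
Qed.

Lemma is_prime_powerP d :
  reflect (exists p k, prime p /\ d = (p ^ k.+1)%N) (is_prime_power d).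
Proof.
apply: (iffP idP) => [|[p [k [p_pr ->]]]]; last first.
  by rewrite /is_prime_power primesX // primes_prime.
rewrite /is_prime_power; case d_primes: (primes d) => [|p [|]] //= _.
have p_d : p \in primes d by rewrite d_primes mem_head.
have := p_d; rewrite mem_primes => /and3P[p_pr d_gt0 _].
exists p, (logn p d).-1; split=> //.
rewrite prednK ?logn_gt0 //.
by rewrite {1}(prod_prime_decomp d_gt0) prime_decompE d_primes big_map big_seq1.
Qed.

Lemma perm_prime_power_divisors n p : (0 < n)%N -> prime p ->
  perm_eq [seq d <- divisors n | is_prime_power d && (pdiv d == p)]
          [seq (p ^ k.+1)%N | k <- iota 0 (logn p n)].
Proof.
move=> n_gt0 p_pr; apply: uniq_perm.
- exact/filter_uniq/divisors_uniq.
- by rewrite map_inj_uniq ?iota_uniq // => i j /(expnI (prime_gt1 p_pr)) [].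
move=> d; rewrite mem_filter -dvdn_divisors //= -andbA; apply/idP/mapP.
- case/and3P=> /is_prime_powerP[q [k [q_pr ->]]].
  rewrite pdiv_pfactor // => /eqP-> pk_n.
  by exists k; rewrite // mem_iota -pfactor_dvdn.
- case=> k; rewrite mem_iota /= => k_lt ->.
  rewrite pdiv_pfactor // eqxx pfactor_dvdn // k_lt !andbT.
  by apply/is_prime_powerP; exists p, k.
Qed.

Lemma count_prime_power_divisors n p : (0 < n)%N -> prime p ->
  count (fun d => is_prime_power d && (pdiv d == p)) (divisors n) = logn p n.
Proof.
move=> n_gt0 p_pr.
rewrite -size_filter (perm_size (perm_prime_power_divisors n_gt0 p_pr)).
by rewrite size_map size_iota.
Qed.

Lemma sum_prime_power_divisors (V : nmodType) (G : nat -> V) n : (0 < n)%N ->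
  \sum_(d <- divisors n | is_prime_power d) G (pdiv d) =
    \sum_(p <- primes n) G p *+ logn p n.
Proof.
move=> n_gt0.
transitivity (\sum_(d <- divisors n | is_prime_power d)
                \sum_(p <- primes n | pdiv d == p) G p).
  rewrite big_seq_cond [RHS]big_seq_cond; apply: eq_bigr => d /andP[].
  rewrite -dvdn_divisors // => d_n /is_prime_powerP[q [k [q_pr d_eq]]].
  have q_n : q \in primes n.
    by rewrite mem_primes q_pr n_gt0 (dvdn_trans _ d_n) // d_eq dvdn_exp.
  rewrite d_eq pdiv_pfactor // -big_filter.
  rewrite (eq_filter (a2 := pred1 q)) => [|p]; last by rewrite /= eq_sym.
  by rewrite filter_pred1_uniq ?primes_uniq // big_seq1.
rewrite (exchange_big_dep xpredT) //=; apply: eq_big_seq => p.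
rewrite mem_primes => /and3P[p_pr _ _].
by rewrite big_const_seq iter_addr_0 count_prime_power_divisors.
Qed.

Section CompletelyAdditive.
Variables (C : nzRingType) (g : nat -> C).
Hypothesis g_add : completely_additive g.

Lemma completely_additive1 : g 1 = 0.
Proof. by apply: (addrI (g 1)); rewrite -g_add // addr0. Qed.

Lemma completely_additiveX p k : (0 < p)%N -> g (p ^ k) = g p *+ k.
Proof.
move=> p_gt0; elim: k => [|k IHk]; first by rewrite completely_additive1.
by rewrite expnS g_add ?expn_gt0 ?p_gt0 // IHk mulrS.
Qed.

Lemma completely_additive_divn n d : (0 < n)%N -> (d %| n)%N ->
  g (n %/ d)%N = g n - g d.
Proof.
move=> n_gt0 d_n; have d_gt0 := dvdn_gt0 n_gt0 d_n.
have q_gt0 : (0 < n %/ d)%N by rewrite divn_gt0 // dvdn_leq.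
by rewrite -[in RHS](divnK d_n) g_add // addrK.
Qed.

Lemma completely_additive_prod (I : Type) (r : seq I) (P : pred I) (u : I -> nat) :
  (forall i, P i -> 0 < u i)%N ->
  g (\prod_(i <- r | P i) u i)%N = \sum_(i <- r | P i) g (u i).
Proof.
move=> u_gt0; elim: r => [|i r IHr]; first by rewrite !big_nil completely_additive1.
rewrite !big_cons; case: ifP => // Pi.
by rewrite g_add ?u_gt0 ?prodn_cond_gt0 // IHr.
Qed.

Lemma completely_additive_primes n : (0 < n)%N ->
  g n = \sum_(p <- primes n) g p *+ logn p n.
Proof.
move=> n_gt0; rewrite {1}(prod_prime_decomp n_gt0) prime_decompE big_map /=.
rewrite big_seq completely_additive_prod => [|p]; last first.
  by rewrite mem_primes => /and3P[p_pr _ _]; rewrite expn_gt0 prime_gt0.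
rewrite [RHS]big_seq; apply: eq_bigr => p.
by rewrite mem_primes => /and3P[p_pr _ _]; rewrite completely_additiveX ?prime_gt0.
Qed.

End CompletelyAdditive.

Lemma L_additive_div_completely_additive (C : fieldType) (f h : nat -> C) :
  L_additive_wrt f h -> (forall n, (0 < n)%N -> h n != 0) ->
  completely_additive (fun n => f n / h n).
Proof.
move=> [h_mul f_L] h_neq0 m n m_gt0 n_gt0.
by rewrite f_L // h_mul //; field; rewrite !h_neq0.
Qed.

Lemma sum_divisors_LambdaF (C : fieldType) (f h : nat -> C) n :
  completely_additive (fun n => f n / h n) -> (0 < n)%N ->
  \sum_(d <- divisors n) LambdaF f h d = f n / h n.
Proof.
move=> F_add n_gt0; rewrite /LambdaF -big_mkcond /=.
rewrite (sum_prime_power_divisors (fun p => f p / h p)) //.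
by rewrite [RHS](completely_additive_primes F_add n_gt0).
Qed.

Theorem theorem2p4 (C : numClosedFieldType) (f h g : nat -> C) :
  L_additive_wrt f h ->
  (forall n : nat, (0 < n)%N -> h n != 0) ->
  completely_additive g ->
  forall n : nat, (0 < n)%N ->
    dconv (LambdaF f h) g n =
      f n * g n / h n - dconv (@one_fn C) (fun m => g m * LambdaF f h m) n.
Proof.
move=> f_L h_neq0 g_add n n_gt0.
have F_add := L_additive_div_completely_additive f_L h_neq0.
rewrite dconv_one_fnl // /dconv.
transitivity (\sum_(d <- divisors n) (LambdaF f h d * g n - g d * LambdaF f h d)).
  rewrite big_seq [RHS]big_seq; apply: eq_bigr => d.
  rewrite -dvdn_divisors // => d_n.
  by rewrite completely_additive_divn // mulrBr [_ * g d]mulrC.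
by rewrite sumrB -mulr_suml sum_divisors_LambdaF // mulrAC.
Qed.
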